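(* Let $n\ge4$ and let $\eta$ be a homogeneous integrable 2-form of degree one on $\mathbb{C}^n$ with $d\eta\not\equiv0$. Then there exist linear coordinates $(x_1,\dots,x_n)$ on $\mathbb{C}^n$ such that $d\eta=dx_1\wedge dx_2\wedge dx_3$ and $\eta=\sum_{1\le i<j\le3}B_{ij}(x_1,x_2,x_3)\,dx_i\wedge dx_j$, where the $B_{ij}$ are linear forms depending only on $x_1,x_2,x_3$; more precisely $\eta=x_1\,dx_2\wedge dx_3+d\alpha$ with $\alpha=\sum_{j=1}^3A_j(x_1,x_2,x_3)\,dx_j$, $A_j$ homogeneous quadratic polynomials.
   Context: A form is homogeneous of degree $m$ if its coefficients (in linear coordinates) are homogeneous polynomials of degree $m$. A holomorphic $q$-form $\eta$ is integrable if every point $p$ outside its zero set has a neighborhood $V$ with holomorphic 1-forms $\omega_1,\dots,\omega_q$ on $V$ such that $\eta|_V=\omega_1\wedge\cdots\wedge\omega_q$ and $d\omega_j\wedge\eta=0$ for all $j$. *)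

From Stdlib Require Import Reals Lra Lia.

Definition Cx := (R * R)%type.
Definition C0 : Cx := (0%R, 0%R).
Definition Cadd (x y : Cx) : Cx := (fst x + fst y, snd x + snd y)%R.
Definition Copp (x : Cx) : Cx := (- fst x, - snd x)%R.
Definition Csub (x y : Cx) : Cx := Cadd x (Copp y).
Definition Cmul (x y : Cx) : Cx :=
  (fst x * fst y - snd x * snd y, fst x * snd y + snd x * fst y)%R.
Definition Cnorm (x : Cx) : R := sqrt (fst x ^ 2 + snd x ^ 2)%R.
Definition Cdelta (i j : nat) : Cx := if Nat.eqb i j then (1%R, 0%R) else C0.

Fixpoint Csum (n : nat) (f : nat -> Cx) : Cx :=
  match n with O => C0 | S m => Cadd (Csum m f) (f m) end.

(* A point of Cx^n is z : nat -> Cx; only the coordinates z 0, ..., z (n-1)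
   are meaningful. *)
Definition Cn := nat -> Cx.

Fixpoint vnorm (n : nat) (z : Cn) : R :=
  match n with O => 0%R | S m => Rmax (vnorm m z) (Cnorm (z m)) end.

Definition vadd (z h : Cn) : Cn := fun i => Cadd (z i) (h i).
Definition vsub (z h : Cn) : Cn := fun i => Csub (z i) (h i).

Definition in_ball (n : nat) (p : Cn) (r : R) (z : Cn) : Prop :=
  (vnorm n (vsub z p) < r)%R.

Definition has_cderiv (n : nat) (f : Cn -> Cx) (z : Cn) (g : nat -> Cx) : Prop :=
  forall eps : R, (eps > 0)%R ->
  exists delta : R, (delta > 0)%R /\
    forall h : Cn, (forall i, (n <= i)%nat -> h i = C0) ->
      (vnorm n h < delta)%R ->
      (Cnorm (Csub (Csub (f (vadd z h)) (f z)) (Csum n (fun k => Cmul (g k) (h k))))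
        <= eps * vnorm n h)%R.

(* A 2-form is given by coefficients E a b (z), meaning
   sum_{a<b<n} E a b z dz_a /\ dz_b ; entries with a >= b are ignored.
   Its full antisymmetric coefficient matrix: *)
Definition full2 (E : nat -> nat -> Cn -> Cx) (a b : nat) (z : Cn) : Cx :=
  if Nat.ltb a b then E a b z
  else if Nat.ltb b a then Copp (E b a z) else C0.

(* 1-form  sum_i f i dz_i ;  D i k = d f_i / d z_k.
   d( sum_i f_i dz_i ) = sum_{a,b} D b a dz_a /\ dz_b, so its (a,b)-coefficient
   (a<b) is  D b a - D a b.  *)
Definition d1form (D : nat -> nat -> Cn -> Cx) (a b : nat) (z : Cn) : Cx :=
  Csub (D b a z) (D a b z).

(* (a,b)-coefficient of the wedge  (sum f_i dz_i) /\ (sum g_i dz_i) *)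
Definition wedge11 (f g : nat -> Cn -> Cx) (a b : nat) (z : Cn) : Cx :=
  Csub (Cmul (f a z) (g b z)) (Cmul (f b z) (g a z)).

(* coefficient of dz_a/\dz_b/\dz_c/\dz_d (a<b<c<d) in al /\ be, for 2-forms
   given by full antisymmetric coefficient matrices al, be at a point *)
Definition wedge22 (al be : nat -> nat -> Cx) (a b c d : nat) : Cx :=
  Cadd (Cadd (Cadd (Cadd (Cadd
    (Cmul (al a b) (be c d))
    (Copp (Cmul (al a c) (be b d))))
    (Cmul (al a d) (be b c)))
    (Cmul (al b c) (be a d)))
    (Copp (Cmul (al b d) (be a c))))
    (Cmul (al c d) (be a b)).

(* Integrability of a 2-form (q = 2 case of the definition in the paper):
   every point p outside the zero set has a neighbourhood (an open ball) V
   with holomorphic 1-forms w1, w2 on V with eta|V = w1 /\ w2 and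
   d wj /\ eta = 0. Holomorphy of the coefficients of wj is expressed by the
   existence of complex derivatives Dj at every point of V. *)
Definition integrable2 (n : nat) (E : nat -> nat -> Cn -> Cx) : Prop :=
  forall p : Cn,
    (exists a b, (a < b < n)%nat /\ E a b p <> C0) ->
    exists r : R, (r > 0)%R /\
    exists (f1 f2 : nat -> Cn -> Cx) (D1 D2 : nat -> nat -> Cn -> Cx),
      (forall z, in_ball n p r z -> forall i, (i < n)%nat ->
          has_cderiv n (f1 i) z (fun k => D1 i k z) /\
          has_cderiv n (f2 i) z (fun k => D2 i k z)) /\
      (forall z, in_ball n p r z -> forall a b, (a < b < n)%nat ->
          E a b z = wedge11 f1 f2 a b z) /\
      (forall z, in_ball n p r z -> forall a b c d, (a < b < c)%nat -> (c < d < n)%nat ->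
          wedge22 (fun i j => full2 (d1form D1) i j z) (fun i j => full2 E i j z) a b c d = C0 /\
          wedge22 (fun i j => full2 (d1form D2) i j z) (fun i j => full2 E i j z) a b c d = C0).

(* eta = sum_{a<b<n} (sum_{k<n} c a b k z_k) dz_a /\ dz_b *)
Definition eta_lin (n : nat) (c : nat -> nat -> nat -> Cx) (a b : nat) (z : Cn) : Cx :=
  Csum n (fun k => Cmul (c a b k) (z k)).

(* coefficient of dz_a/\dz_b/\dz_e (a<b<e) in d eta (a constant):
   d_a E_be - d_b E_ae + d_e E_ab *)
Definition d_eta_lin (c : nat -> nat -> nat -> Cx) (a b e : nat) : Cx :=
  Cadd (Csub (c b e a) (c a e b)) (c a b e).

Definition coordX (n : nat) (P : nat -> nat -> Cx) (i : nat) (z : Cn) : Cx :=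
  Csum n (fun k => Cmul (P i k) (z k)).

(* z-coefficient (a<b) of the 2-form  sum_{k,j<m} T k j dx_k /\ dx_j *)
Definition pull2 (m : nat) (P : nat -> nat -> Cx) (T : nat -> nat -> Cx) (a b : nat) : Cx :=
  Csum m (fun k => Csum m (fun j =>
    Cmul (T k j) (Csub (Cmul (P k a) (P j b)) (Cmul (P k b) (P j a))))).

(* z-coefficient of dx_1 /\ dx_2 /\ dx_3 (indices 0,1,2) on dz_a/\dz_b/\dz_e *)
Definition det3 (P : nat -> nat -> Cx) (a b e : nat) : Cx :=
  Cadd (Csub
    (Cmul (P 0%nat a) (Csub (Cmul (P 1%nat b) (P 2%nat e)) (Cmul (P 1%nat e) (P 2%nat b))))
    (Cmul (P 0%nat b) (Csub (Cmul (P 1%nat a) (P 2%nat e)) (Cmul (P 1%nat e) (P 2%nat a)))))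
    (Cmul (P 0%nat e) (Csub (Cmul (P 1%nat a) (P 2%nat b)) (Cmul (P 1%nat b) (P 2%nat a)))).

(* A_j(x1,x2,x3) = sum_{u,v<3} q j u v x_u x_v  (homogeneous quadratic);
   partial derivative in x_k : sum_{v<3} (q j k v + q j v k) x_v *)
Definition dA (q : nat -> nat -> nat -> Cx) (x : nat -> Cx) (j k : nat) : Cx :=
  Csum 3 (fun v => Cmul (Cadd (q j k v) (q j v k)) (x v)).

(* coefficients T k j (x) of  x1 dx2/\dx3 + d alpha,
   alpha = sum_{j<3} A_j dx_j, d alpha = sum_{k,j<3} dA_j/dx_k dx_k /\ dx_j *)
Definition T_normal (q : nat -> nat -> nat -> Cx) (x : nat -> Cx) (k j : nat) : Cx :=
  Cadd (if andb (Nat.eqb k 1) (Nat.eqb j 2) then x 0%nat else C0)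
       (if andb (Nat.ltb k 3) (Nat.ltb j 3) then dA q x j k else C0).

From Stdlib Require Import Reals Lra Lia Field Ring.
From Coquelicot Require Complex.

(* Pick s1 < s2 < s3 with W := (d eta)_(s1 s2 s3) <> 0 and let u, v, w be the constant
   covectors u_m = (d eta)_(m s2 s3), v_m = (d eta)_(s1 m s3), w_m = (d eta)_(s1 s2 m).
   Near a point where eta does not vanish, integrability writes eta = xi1 /\ xi2 with
   xi_j /\ d eta = d xi_j /\ eta = 0; the first equality holds because the coefficients of
   eta are linear, hence equal to the derivatives of those of xi1 /\ xi2.  Since
   (xi /\ d eta)_(s1 s2 s3 k) = 0 for all k, each xi_j lies in the span of u, v, w, so on a
   ball eta(z) is a combination of u /\ v, u /\ w, v /\ w whose coefficients are the three
   linear forms eta_(s1 s2), eta_(s1 s3), eta_(s2 s3); by linearity this holds everywhere.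
   Evaluating that identity at the indices s1, s2, s3 puts these three forms in the span of
   u, v, w as well and gives W^2 d eta = u /\ v /\ w.  In the coordinates x1 = u.z,
   x2 = v.z / W, x3 = w.z / W (completed by the remaining z's) we get d eta = dx1 /\ dx2 /\ dx3
   and eta has linear coefficients in x1, x2, x3 only; then eta - x1 dx2 /\ dx3 is closed,
   hence the differential of an explicit quadratic 1-form. *)

Definition C1 : Cx := (1%R, 0%R).
Definition Cinv (x : Cx) : Cx :=
  (fst x / (fst x ^ 2 + snd x ^ 2), - snd x / (fst x ^ 2 + snd x ^ 2))%R.
Definition Cdiv (x y : Cx) : Cx := Cmul x (Cinv y).

Lemma Cx_ring_theory : ring_theory C0 C1 Cadd Cmul Csub Copp (@eq Cx).
Proof.
  constructor; intros; repeat match goal with x : Cx |- _ => destruct x end;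
  unfold Cadd, Cmul, Csub, Copp, C0, C1; apply injective_projections; simpl; ring.
Qed.

Lemma Cx_field_theory : field_theory C0 C1 Cadd Cmul Csub Copp Cdiv Cinv (@eq Cx).
Proof.
  constructor; [exact Cx_ring_theory | | reflexivity |].
  - unfold C1, C0; intro H; injection H; lra.
  - intros [a b] H. unfold Cinv, Cmul, C1; simpl.
    assert (Hn : (a ^ 2 + b ^ 2 <> 0)%R).
    { intro H0. apply H. unfold C0. assert (a = 0 /\ b = 0)%R as [-> ->] by nra. reflexivity. }
    apply injective_projections; simpl; field; simpl in Hn; rewrite !Rmult_1_r in Hn; exact Hn.
Qed.

Add Field Cx_field : Cx_field_theory.

Lemma Ceq_dec (x y : Cx) : {x = y} + {x <> y}.
Proof.
  destruct x as [a b], y as [a' b'].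
  destruct (Req_dec_T a a') as [<-|Ha]; [destruct (Req_dec_T b b') as [<-|Hb]|];
    [left; reflexivity | right; congruence | right; congruence].
Qed.

Lemma Cmul_reg_l (W A B : Cx) : W <> C0 -> Cmul W A = Cmul W B -> A = B.
Proof.
  intros HW H. transitivity (Cmul (Cinv W) (Cmul W A)); [field; exact HW|].
  rewrite H. field. exact HW.
Qed.

Lemma Csub_eq0 (A B : Cx) : Csub A B = C0 -> A = B.
Proof. intros H. transitivity (Cadd (Csub A B) B); [ring | rewrite H; ring]. Qed.

Lemma C2_neq0 : Cadd C1 C1 <> C0.
Proof. unfold C1, C0, Cadd; simpl; intro H; injection H; lra. Qed.

Lemma Csum_ext n f g : (forall k, (k < n)%nat -> f k = g k) -> Csum n f = Csum n g.
Proof.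
  induction n; intros H; simpl; auto.
  rewrite IHn by (intros; apply H; lia). rewrite H by lia. reflexivity.
Qed.

Lemma Csum_add n f g : Csum n (fun k => Cadd (f k) (g k)) = Cadd (Csum n f) (Csum n g).
Proof. induction n; simpl; [ring | rewrite IHn; ring]. Qed.

Lemma Csum_sub n f g : Csum n (fun k => Csub (f k) (g k)) = Csub (Csum n f) (Csum n g).
Proof. induction n; simpl; [ring | rewrite IHn; ring]. Qed.

Lemma Csum_mul_l n a f : Csum n (fun k => Cmul a (f k)) = Cmul a (Csum n f).
Proof. induction n; simpl; [ring | rewrite IHn; ring]. Qed.

Lemma Csum_eq0 n f : (forall k, (k < n)%nat -> f k = C0) -> Csum n f = C0.
Proof.
  induction n; intros H; simpl; auto.
  rewrite IHn by (intros; apply H; lia). rewrite H by lia. ring.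
Qed.

Lemma Csum_extract n f m : (m < n)%nat ->
  Csum n f = Cadd (f m) (Csum n (fun k => if Nat.eqb k m then C0 else f k)).
Proof.
  induction n; intros Hm; [lia|]. simpl.
  destruct (Nat.eq_dec m n) as [->|Hne].
  - rewrite Nat.eqb_refl, (Csum_ext n (fun k => if Nat.eqb k n then C0 else f k) f); [ring|].
    intros k Hk. destruct (Nat.eqb_spec k n); [lia|auto].
  - rewrite IHn by lia. destruct (Nat.eqb_spec n m); [lia|]. ring.
Qed.

Lemma Csum_single n f m : (m < n)%nat -> (forall k, (k < n)%nat -> k <> m -> f k = C0) ->
  Csum n f = f m.
Proof.
  intros Hm H. rewrite (Csum_extract n f m Hm), Csum_eq0; [ring|].
  intros k Hk. destruct (Nat.eqb_spec k m); auto.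
Qed.

Lemma Csum_pair n f p q : (p < n)%nat -> (q < n)%nat -> p <> q ->
  (forall k, (k < n)%nat -> k <> p -> k <> q -> f k = C0) -> Csum n f = Cadd (f p) (f q).
Proof.
  intros Hp Hq Hpq H. rewrite (Csum_extract n f p Hp). f_equal.
  rewrite (Csum_single n _ q Hq).
  - destruct (Nat.eqb_spec q p); [lia|auto].
  - intros k Hk Hkq. destruct (Nat.eqb_spec k p); auto.
Qed.

Lemma Csum_lincomb3 n (W A B Cc : Cx) (f u v w z : nat -> Cx) :
  (forall k, (k < n)%nat -> Cmul W (f k) = Cadd (Cadd (Cmul A (u k)) (Cmul B (v k))) (Cmul Cc (w k))) ->
  Cmul W (Csum n (fun k => Cmul (f k) (z k))) =
  Cadd (Cadd (Cmul A (Csum n (fun k => Cmul (u k) (z k)))) (Cmul B (Csum n (fun k => Cmul (v k) (z k)))))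
       (Cmul Cc (Csum n (fun k => Cmul (w k) (z k)))).
Proof.
  induction n; intros H; simpl; [ring|].
  transitivity (Cadd (Cmul W (Csum n (fun k => Cmul (f k) (z k)))) (Cmul (Cmul W (f n)) (z n)));
    [ring|].
  rewrite IHn by (intros; apply H; lia). rewrite H by lia. ring.
Qed.

(** * Norms and complex differentiation *)

Lemma Cnorm_add_le x y : (Cnorm (Cadd x y) <= Cnorm x + Cnorm y)%R.
Proof. exact (Complex.Cmod_triangle x y). Qed.
Lemma Cnorm_mul x y : Cnorm (Cmul x y) = (Cnorm x * Cnorm y)%R.
Proof. exact (Complex.Cmod_mult x y). Qed.
Lemma Cnorm_opp x : Cnorm (Copp x) = Cnorm x.
Proof. exact (Complex.Cmod_opp x). Qed.
Lemma Cnorm_ge0 x : (0 <= Cnorm x)%R.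
Proof. exact (Complex.Cmod_ge_0 x). Qed.
Lemma Cnorm_C0 : Cnorm C0 = 0%R.
Proof. exact Complex.Cmod_0. Qed.
Lemma Cnorm_eq0 x : Cnorm x = 0%R -> x = C0.
Proof. exact (Complex.Cmod_eq_0 x). Qed.
Lemma Cnorm_real t : Cnorm (t, 0%R) = Rabs t.
Proof. exact (Complex.Cmod_R t). Qed.
Lemma Cnorm_sub_le x y : (Cnorm (Csub x y) <= Cnorm x + Cnorm y)%R.
Proof. unfold Csub. rewrite <- (Cnorm_opp y). apply Cnorm_add_le. Qed.

Lemma vnorm_ge0 n z : (0 <= vnorm n z)%R.
Proof. induction n; simpl; [lra|]. apply Rle_trans with (vnorm n z); [auto | apply Rmax_l]. Qed.

Lemma Cnorm_le_vnorm n z i : (i < n)%nat -> (Cnorm (z i) <= vnorm n z)%R.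
Proof.
  induction n; intros H; [lia|]. simpl.
  destruct (Nat.eq_dec i n) as [->|]; [apply Rmax_r|].
  apply Rle_trans with (vnorm n z); [apply IHn; lia | apply Rmax_l].
Qed.

Lemma vnorm_le n z M : (0 <= M)%R -> (forall i, (i < n)%nat -> (Cnorm (z i) <= M)%R) ->
  (vnorm n z <= M)%R.
Proof.
  induction n; intros HM H; simpl; auto.
  apply Rmax_lub; [apply IHn; auto | apply H; lia].
Qed.

Definition evec (k : nat) (t : Cx) : Cn := fun i => if Nat.eqb i k then t else C0.

Lemma Csum_evec n a k t : (k < n)%nat -> Csum n (fun j => Cmul (a j) (evec k t j)) = Cmul (a k) t.
Proof.
  intros Hk. rewrite (Csum_single _ _ k Hk).
  - unfold evec. rewrite Nat.eqb_refl. reflexivity.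
  - intros j _ Hj. unfold evec. destruct (Nat.eqb_spec j k); [lia | ring].
Qed.

Lemma vnorm_evec n k x : (k < n)%nat -> vnorm n (evec k x) = Cnorm x.
Proof.
  intros Hk. apply Rle_antisym.
  - apply vnorm_le; [apply Cnorm_ge0|]. intros i _. unfold evec.
    destruct (Nat.eqb_spec i k); [lra | rewrite Cnorm_C0; apply Cnorm_ge0].
  - pose proof (Cnorm_le_vnorm n (evec k x) k Hk) as H.
    unfold evec in H at 1. rewrite Nat.eqb_refl in H. exact H.
Qed.

Fixpoint l1norm (n : nat) (F : nat -> Cx) : R :=
  match n with O => 0%R | S m => (l1norm m F + Cnorm (F m))%R end.

Lemma l1norm_ge0 n F : (0 <= l1norm n F)%R.
Proof. induction n; simpl; [lra|]. pose proof (Cnorm_ge0 (F n)). lra. Qed.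

Lemma Cnorm_Csum_mul_le n F h :
  (Cnorm (Csum n (fun k => Cmul (F k) (h k))) <= l1norm n F * vnorm n h)%R.
Proof.
  induction n; simpl.
  - rewrite Cnorm_C0. lra.
  - eapply Rle_trans; [apply Cnorm_add_le|]. rewrite Cnorm_mul.
    pose proof (Rmax_l (vnorm n h) (Cnorm (h n))). pose proof (Rmax_r (vnorm n h) (Cnorm (h n))).
    pose proof (l1norm_ge0 n F). pose proof (Cnorm_ge0 (F n)). pose proof (vnorm_ge0 n h).
    pose proof (Cnorm_ge0 (h n)). nra.
Qed.

Lemma cderiv_sub n f g z F G :
  has_cderiv n f z F -> has_cderiv n g z G ->
  has_cderiv n (fun y => Csub (f y) (g y)) z (fun k => Csub (F k) (G k)).
Proof.
  intros Hf Hg eps Heps.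
  destruct (Hf (eps/2)%R ltac:(lra)) as [df [Hdf Hf']].
  destruct (Hg (eps/2)%R ltac:(lra)) as [dg [Hdg Hg']].
  exists (Rmin df dg). split; [apply Rmin_glb_lt; lra|].
  intros h Hh Hn.
  specialize (Hf' h Hh (Rlt_le_trans _ _ _ Hn (Rmin_l _ _))).
  specialize (Hg' h Hh (Rlt_le_trans _ _ _ Hn (Rmin_r _ _))).
  rewrite (Csum_ext n _ (fun k => Csub (Cmul (F k) (h k)) (Cmul (G k) (h k)))) by (intros; ring).
  rewrite Csum_sub.
  set (LF := Csum n (fun k => Cmul (F k) (h k))) in *.
  set (LG := Csum n (fun k => Cmul (G k) (h k))) in *.
  replace (Csub (Csub (Csub (f (vadd z h)) (g (vadd z h))) (Csub (f z) (g z))) (Csub LF LG))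
    with (Csub (Csub (Csub (f (vadd z h)) (f z)) LF) (Csub (Csub (g (vadd z h)) (g z)) LG))
    by ring.
  eapply Rle_trans; [apply Cnorm_sub_le | lra].
Qed.

Lemma product_remainder_le (nf ng MF MG na nb nLf nLg t e : R) :
  (0 <= nf)%R -> (0 <= ng)%R -> (0 <= MF)%R -> (0 <= MG)%R -> (0 <= na)%R -> (0 <= nb)%R ->
  (0 <= nLf)%R -> (0 <= nLg)%R -> (0 <= t <= 1)%R -> (0 < e <= 1)%R ->
  (na <= e * t)%R -> (nb <= e * t)%R -> (nLf <= MF * t)%R -> (nLg <= MG * t)%R ->
  let K := (nf + ng + MF + MG + 1)%R in
  (nf * nb + nLf * nLg + nLf * nb + na * ng + na * nLg + na * nb
     <= (K * e + K * K * t) * t)%R.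
Proof.
  intros. subst K.
  assert (Het : (0 <= e * t <= 1)%R) by nra.
  assert (nf * nb <= nf * e * t)%R by nra.
  assert (na * ng <= ng * e * t)%R by nra.
  assert (nLf * nb <= MF * e * t)%R.
  { apply Rle_trans with (MF * t * (e * t))%R; [apply Rmult_le_compat; lra|].
    assert (0 <= MF * e * t)%R by (apply Rmult_le_pos; [|lra]; apply Rmult_le_pos; lra). nra. }
  assert (na * nLg <= MG * e * t)%R.
  { apply Rle_trans with (e * t * (MG * t))%R; [apply Rmult_le_compat; lra|].
    assert (0 <= MG * e * t)%R by (apply Rmult_le_pos; [|lra]; apply Rmult_le_pos; lra). nra. }
  assert (na * nb <= e * t)%R.
  { apply Rle_trans with (e * t * (e * t))%R; [apply Rmult_le_compat; lra | nra]. }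
  assert (nLf * nLg <= MF * MG * t * t)%R.
  { apply Rle_trans with (MF * t * (MG * t))%R; [apply Rmult_le_compat; lra | right; ring]. }
  assert (MF * MG <= (nf + ng + MF + MG + 1) * (nf + ng + MF + MG + 1))%R
    by (apply Rmult_le_compat; lra).
  assert (0 <= t * t)%R by nra.
  nra.
Qed.

Lemma Cnorm_product_remainder_le (fz gz Lf Lg a b : Cx) (MF MG t e : R) :
  (0 <= MF)%R -> (0 <= MG)%R -> (0 <= t <= 1)%R -> (0 < e <= 1)%R ->
  (Cnorm a <= e * t)%R -> (Cnorm b <= e * t)%R -> (Cnorm Lf <= MF * t)%R -> (Cnorm Lg <= MG * t)%R ->
  (Cnorm (Csub (Csub (Cmul (Cadd (Cadd fz Lf) a) (Cadd (Cadd gz Lg) b)) (Cmul fz gz))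
                (Cadd (Cmul gz Lf) (Cmul fz Lg)))
   <= ((Cnorm fz + Cnorm gz + MF + MG + 1) * e
       + (Cnorm fz + Cnorm gz + MF + MG + 1) * (Cnorm fz + Cnorm gz + MF + MG + 1) * t) * t)%R.
Proof.
  intros HMF HMG Ht He Ha Hb HLf HLg.
  replace (Csub (Csub (Cmul (Cadd (Cadd fz Lf) a) (Cadd (Cadd gz Lg) b)) (Cmul fz gz))
                (Cadd (Cmul gz Lf) (Cmul fz Lg)))
    with (Cadd (Cadd (Cadd (Cadd (Cadd (Cmul fz b) (Cmul Lf Lg)) (Cmul Lf b)) (Cmul a gz))
           (Cmul a Lg)) (Cmul a b)) by ring.
  pose proof (product_remainder_le (Cnorm fz) (Cnorm gz) MF MG (Cnorm a) (Cnorm b) (Cnorm Lf)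
    (Cnorm Lg) t e (Cnorm_ge0 _) (Cnorm_ge0 _) HMF HMG (Cnorm_ge0 _) (Cnorm_ge0 _) (Cnorm_ge0 _)
    (Cnorm_ge0 _) Ht He Ha Hb HLf HLg) as Bd. simpl in Bd.
  pose proof (Cnorm_add_le (Cmul fz b) (Cmul Lf Lg)).
  pose proof (Cnorm_add_le (Cadd (Cmul fz b) (Cmul Lf Lg)) (Cmul Lf b)).
  pose proof (Cnorm_add_le (Cadd (Cadd (Cmul fz b) (Cmul Lf Lg)) (Cmul Lf b)) (Cmul a gz)).
  pose proof (Cnorm_add_le (Cadd (Cadd (Cadd (Cmul fz b) (Cmul Lf Lg)) (Cmul Lf b)) (Cmul a gz))
    (Cmul a Lg)).
  pose proof (Cnorm_add_le (Cadd (Cadd (Cadd (Cadd (Cmul fz b) (Cmul Lf Lg)) (Cmul Lf b))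
    (Cmul a gz)) (Cmul a Lg)) (Cmul a b)).
  rewrite !Cnorm_mul in *. lra.
Qed.

Lemma cderiv_mul n f g z F G :
  has_cderiv n f z F -> has_cderiv n g z G ->
  has_cderiv n (fun y => Cmul (f y) (g y)) z
    (fun k => Cadd (Cmul (F k) (g z)) (Cmul (f z) (G k))).
Proof.
  intros Hf Hg eps Heps.
  set (K := (Cnorm (f z) + Cnorm (g z) + l1norm n F + l1norm n G + 1)%R).
  assert (HK : (1 <= K)%R).
  { unfold K. pose proof (Cnorm_ge0 (g z)). pose proof (Cnorm_ge0 (f z)).
    pose proof (l1norm_ge0 n F). pose proof (l1norm_ge0 n G). lra. }
  set (e := Rmin 1 (eps / (2 * K))).
  assert (He : (0 < e <= 1)%R /\ (K * e <= eps / 2)%R).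
  { assert (0 < eps / (2 * K))%R by (apply Rdiv_lt_0_compat; lra).
    pose proof (Rmin_r 1 (eps / (2 * K))) as He. fold e in He. split; [split; [apply Rmin_glb_lt; lra | apply Rmin_l]|].
    apply Rle_trans with (K * (eps / (2 * K)))%R; [apply Rmult_le_compat_l; lra | right; field; lra]. }
  destruct (Hf e ltac:(lra)) as [df [Hdf Hf']].
  destruct (Hg e ltac:(lra)) as [dg [Hdg Hg']].
  set (d := Rmin (Rmin df dg) (Rmin 1 (eps / (2 * K * K)))).
  assert (Hd : (0 < d /\ d <= df /\ d <= dg /\ d <= 1 /\ K * K * d <= eps / 2)%R).
  { assert (0 < eps / (2 * K * K))%R by (apply Rdiv_lt_0_compat; nra).
    pose proof (Rmin_l (Rmin df dg) (Rmin 1 (eps / (2 * K * K)))) as m1.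
    pose proof (Rmin_r (Rmin df dg) (Rmin 1 (eps / (2 * K * K)))) as m2. fold d in m1, m2.
    pose proof (Rmin_l df dg). pose proof (Rmin_r df dg).
    pose proof (Rmin_l 1 (eps / (2 * K * K))). pose proof (Rmin_r 1 (eps / (2 * K * K))).
    repeat split; try lra.
    - unfold d. repeat apply Rmin_glb_lt; lra.
    - apply Rle_trans with (K * K * (eps / (2 * K * K)))%R;
        [apply Rmult_le_compat_l; nra | right; field; lra]. }
  exists d. split; [lra|]. intros h Hh Hnh.
  specialize (Hf' h Hh ltac:(lra)). specialize (Hg' h Hh ltac:(lra)).
  rewrite (Csum_ext n _ (fun k => Cadd (Cmul (g z) (Cmul (F k) (h k))) (Cmul (f z) (Cmul (G k) (h k)))))
    by (intros; ring).
  rewrite Csum_add, !Csum_mul_l.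
  set (Lf := Csum n (fun k => Cmul (F k) (h k))) in *.
  set (Lg := Csum n (fun k => Cmul (G k) (h k))) in *.
  replace (f (vadd z h)) with (Cadd (Cadd (f z) Lf) (Csub (Csub (f (vadd z h)) (f z)) Lf)) by ring.
  replace (g (vadd z h)) with (Cadd (Cadd (g z) Lg) (Csub (Csub (g (vadd z h)) (g z)) Lg)) by ring.
  assert (Ht : (0 <= vnorm n h)%R) by apply vnorm_ge0.
  eapply Rle_trans; [apply (Cnorm_product_remainder_le _ _ _ _ _ _ _ _ (vnorm n h) e (l1norm_ge0 n F)
    (l1norm_ge0 n G) ltac:(lra) ltac:(lra) Hf' Hg' (Cnorm_Csum_mul_le _ _ _) (Cnorm_Csum_mul_le _ _ _))|].
  fold K. apply Rmult_le_compat_r; [lra|].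
  assert (K * K * vnorm n h <= K * K * d)%R by (apply Rmult_le_compat_l; nra). lra.
Qed.

Lemma in_ball_shift n p r z h : in_ball n p r z ->
  (vnorm n h < r - vnorm n (vsub z p))%R -> in_ball n p r (vadd z h).
Proof.
  unfold in_ball. intros Hz Hh.
  pose proof (vnorm_ge0 n (vsub z p)). pose proof (vnorm_ge0 n h).
  apply Rle_lt_trans with (vnorm n (vsub z p) + vnorm n h)%R; [|lra].
  apply vnorm_le; [lra|].
  intros i Hi. replace (vsub (vadd z h) p i) with (Cadd (vsub z p i) (h i))
    by (unfold vsub, vadd; ring).
  eapply Rle_trans; [apply Cnorm_add_le|].
  pose proof (Cnorm_le_vnorm n (vsub z p) i Hi). pose proof (Cnorm_le_vnorm n h i Hi). lra.
Qed.

Lemma cderiv_linear_coef n g G p r z (l : nat -> Cx) :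
  in_ball n p r z -> has_cderiv n g z G ->
  (forall y, in_ball n p r y -> g y = Csum n (fun k => Cmul (l k) (y k))) ->
  forall k, (k < n)%nat -> G k = l k.
Proof.
  intros Hz Hg Hlin k Hk.
  destruct (Req_dec (Cnorm (Csub (G k) (l k))) 0) as [H0|H0];
    [apply Csub_eq0, Cnorm_eq0, H0|exfalso].
  pose proof (Cnorm_ge0 (Csub (G k) (l k))).
  set (nd := Cnorm (Csub (G k) (l k))) in *.
  assert (Hnd : (0 < nd)%R) by lra.
  destruct (Hg (nd/2)%R ltac:(lra)) as [dl [Hdl Hg']].
  pose proof Hz as Hz'. unfold in_ball in Hz'.
  pose proof (Rmin_l (dl/2) ((r - vnorm n (vsub z p))/2)).
  pose proof (Rmin_r (dl/2) ((r - vnorm n (vsub z p))/2)).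
  set (t := Rmin (dl/2) ((r - vnorm n (vsub z p))/2)) in *.
  assert (Ht : (0 < t)%R) by (apply Rmin_glb_lt; lra).
  set (h := evec k (t, 0%R)).
  assert (Hnh : vnorm n h = t).
  { unfold h. rewrite vnorm_evec, Cnorm_real by exact Hk. apply Rabs_pos_eq. lra. }
  assert (Hin : in_ball n p r (vadd z h)).
  { apply in_ball_shift; [exact Hz|]. rewrite Hnh. lra. }
  assert (Hh0 : forall i, (n <= i)%nat -> h i = C0).
  { intros i Hi. unfold h, evec. destruct (Nat.eqb_spec i k); [lia|auto]. }
  specialize (Hg' h Hh0 ltac:(rewrite Hnh; lra)).
  rewrite Hnh, (Hlin _ Hin), (Hlin _ Hz), <- Csum_sub in Hg'.
  rewrite (Csum_ext n _ (fun j => Cmul (l j) (h j))) in Hg' by (intros; unfold vadd; ring).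
  unfold h in Hg'. rewrite !Csum_evec in Hg' by exact Hk.
  replace (Csub (Cmul (l k) (t, 0%R)) (Cmul (G k) (t, 0%R)))
    with (Copp (Cmul (Csub (G k) (l k)) (t, 0%R))) in Hg' by ring.
  rewrite Cnorm_opp, Cnorm_mul, Cnorm_real, Rabs_pos_eq in Hg' by lra.
  fold nd in Hg'. nra.
Qed.

Lemma linear_form_eq0_on_ball n p r (l : nat -> Cx) : (r > 0)%R ->
  (forall y, in_ball n p r y -> Csum n (fun k => Cmul (l k) (y k)) = C0) ->
  forall k, (k < n)%nat -> l k = C0.
Proof.
  intros Hr H k Hk.
  assert (Hp : in_ball n p r p).
  { unfold in_ball. apply Rle_lt_trans with 0%R; [|lra]. apply vnorm_le; [lra|].
    intros i _. replace (vsub p p i) with C0 by (unfold vsub; ring). rewrite Cnorm_C0. lra. }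
  symmetry. apply (cderiv_linear_coef n (fun _ => C0) (fun _ => C0) p r p l Hp); auto.
  - intros eps Heps. exists 1%R. split; [lra|]. intros h _ _.
    rewrite Csum_eq0 by (intros; ring).
    replace (Csub (Csub C0 C0) C0) with C0 by ring. rewrite Cnorm_C0.
    pose proof (vnorm_ge0 n h). nra.
  - intros y Hy. symmetry. auto.
Qed.

(** * Coefficients of eta and d eta *)

(* [eta_full c i j k] is the coefficient of [z_k] in the antisymmetric coefficient [eta_ij],
   and [deta_full c i j k] the (constant) antisymmetric coefficient of [d eta]. *)
Definition eta_full (c : nat -> nat -> nat -> Cx) (i j k : nat) : Cx :=
  if Nat.ltb i j then c i j k else if Nat.ltb j i then Copp (c j i k) else C0.
Definition deta_full (c : nat -> nat -> nat -> Cx) (i j k : nat) : Cx :=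
  Cadd (Csub (eta_full c j k i) (eta_full c i k j)) (eta_full c i j k).

(* coefficient of dz_a /\ dz_b /\ dz_c /\ dz_d in xi /\ om, for a 1-form xi and a 3-form om *)
Definition wedge13 (om : nat -> nat -> nat -> Cx) (xi : nat -> Cx) (a b cc d : nat) : Cx :=
  Csub (Cadd (Csub (Cmul (xi a) (om b cc d)) (Cmul (xi b) (om a cc d)))
     (Cmul (xi cc) (om a b d))) (Cmul (xi d) (om a b cc)).

Lemma eta_full_lt c i j k : (i < j)%nat -> eta_full c i j k = c i j k.
Proof. intros H. unfold eta_full. destruct (Nat.ltb_spec i j); [auto|lia]. Qed.
Lemma eta_full_anti c i j k : eta_full c j i k = Copp (eta_full c i j k).
Proof. unfold eta_full. destruct (Nat.ltb_spec j i), (Nat.ltb_spec i j); try lia; ring. Qed.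
Lemma eta_full_diag c i k : eta_full c i i k = C0.
Proof. unfold eta_full. rewrite Nat.ltb_irrefl. reflexivity. Qed.

Lemma deta_full_swap12 c i j k : deta_full c j i k = Copp (deta_full c i j k).
Proof. unfold deta_full. rewrite (eta_full_anti c j i k). ring. Qed.
Lemma deta_full_swap23 c i j k : deta_full c i k j = Copp (deta_full c i j k).
Proof. unfold deta_full. rewrite (eta_full_anti c k j i), (eta_full_anti c j k i). ring. Qed.
Lemma deta_full_rep12 c i k : deta_full c i i k = C0.
Proof. unfold deta_full. rewrite eta_full_diag. ring. Qed.
Lemma deta_full_rep23 c i k : deta_full c i k k = C0.
Proof. unfold deta_full. rewrite eta_full_diag. ring. Qed.
Lemma deta_full_rep13 c i k : deta_full c i k i = C0.
Proof. unfold deta_full. rewrite (eta_full_anti c i k i), eta_full_diag. ring. Qed.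
Lemma deta_full_sorted c i j k : (i < j)%nat -> (j < k)%nat -> deta_full c i j k = d_eta_lin c i j k.
Proof. intros. unfold deta_full, d_eta_lin. rewrite !eta_full_lt by lia. reflexivity. Qed.

Lemma full2_lt E i j (z : Cn) : (i < j)%nat -> full2 E i j z = E i j z.
Proof. intros H. unfold full2. destruct (Nat.ltb_spec i j); [auto|lia]. Qed.

(* If the coefficients of eta are, by the product rule, the derivatives of those of
   xi1 /\ xi2, then xi_j /\ d eta = d xi_j /\ eta. *)
Lemma wedge13_deta_full n (c : nat -> nat -> nat -> Cx) (F1 F2 : nat -> Cx) (D1 D2 : nat -> nat -> Cx)
  a b cc d :
  (a < b)%nat -> (b < cc)%nat -> (cc < d)%nat -> (d < n)%nat ->
  (forall x y k, (x < y < n)%nat -> (k < n)%nat ->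
     c x y k = Csub (Cadd (Cmul (D1 x k) (F2 y)) (Cmul (F1 x) (D2 y k)))
                    (Cadd (Cmul (D1 y k) (F2 x)) (Cmul (F1 y) (D2 x k)))) ->
  wedge13 (deta_full c) F1 a b cc d =
    wedge22 (fun i j => Csub (D1 j i) (D1 i j))
            (fun i j => Csub (Cmul (F1 i) (F2 j)) (Cmul (F1 j) (F2 i))) a b cc d /\
  wedge13 (deta_full c) F2 a b cc d =
    wedge22 (fun i j => Csub (D2 j i) (D2 i j))
            (fun i j => Csub (Cmul (F1 i) (F2 j)) (Cmul (F1 j) (F2 i))) a b cc d.
Proof.
  intros H1 H2 H3 H4 Hc. unfold wedge13, deta_full, wedge22.
  rewrite !eta_full_lt by lia. rewrite !Hc by lia. split; ring.
Qed.

Lemma integrable_local_factorization n c p : integrable2 n (eta_lin n c) ->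
  (exists a b, (a < b < n)%nat /\ eta_lin n c a b p <> C0) ->
  exists r, (r > 0)%R /\ exists f1 f2 : nat -> Cn -> Cx, forall z, in_ball n p r z ->
   (forall a b, (a < b < n)%nat -> eta_lin n c a b z = wedge11 f1 f2 a b z) /\
   (forall a b cc d, (a < b)%nat -> (b < cc)%nat -> (cc < d)%nat -> (d < n)%nat ->
      wedge13 (deta_full c) (fun i => f1 i z) a b cc d = C0 /\
      wedge13 (deta_full c) (fun i => f2 i z) a b cc d = C0).
Proof.
  intros Hint Hp.
  destruct (Hint p Hp) as [r [Hr [f1 [f2 [D1 [D2 [Hder [Heq Hw]]]]]]]].
  exists r. split; [exact Hr|]. exists f1, f2. intros z Hz. split; [intros; apply Heq; auto|].
  assert (Hc : forall x y k, (x < y < n)%nat -> (k < n)%nat ->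
     c x y k = Csub (Cadd (Cmul (D1 x k z) (f2 y z)) (Cmul (f1 x z) (D2 y k z)))
                    (Cadd (Cmul (D1 y k z) (f2 x z)) (Cmul (f1 y z) (D2 x k z)))).
  { intros x y k Hxy Hk. symmetry.
    apply (cderiv_linear_coef n (wedge11 f1 f2 x y)
      (fun k => Csub (Cadd (Cmul (D1 x k z) (f2 y z)) (Cmul (f1 x z) (D2 y k z)))
                     (Cadd (Cmul (D1 y k z) (f2 x z)) (Cmul (f1 y z) (D2 x k z)))) p r z (c x y) Hz);
      [| intros y' Hy'; symmetry; apply (Heq y' Hy' x y Hxy) | exact Hk].
    unfold wedge11. apply cderiv_sub; apply cderiv_mul; apply Hder; auto; lia. }
  intros a b cc d H1 H2 H3 H4.
  destruct (wedge13_deta_full n c (fun i => f1 i z) (fun i => f2 i z) (fun i k => D1 i k z)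
             (fun i k => D2 i k z) a b cc d H1 H2 H3 H4 Hc) as [Q1 Q2].
  destruct (Hw z Hz a b cc d ltac:(lia) ltac:(lia)) as [W1 W2].
  unfold wedge22 in *. rewrite !full2_lt in W1, W2 by lia.
  unfold d1form in W1, W2. rewrite !(Heq z Hz) in W1, W2 by lia. unfold wedge11 in W1, W2.
  rewrite Q1, Q2. split; [exact W1 | exact W2].
Qed.

(** * eta in the span of the coordinates of d eta *)

Definition det3v (x y z : nat -> Cx) (i j k : nat) : Cx :=
  Cadd (Csub (Cmul (x i) (Csub (Cmul (y j) (z k)) (Cmul (y k) (z j))))
             (Cmul (x j) (Csub (Cmul (y i) (z k)) (Cmul (y k) (z i)))))
       (Cmul (x k) (Csub (Cmul (y i) (z j)) (Cmul (y j) (z i)))).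

Definition wedge_vec (x y : nat -> Cx) (i j : nat) : Cx := Csub (Cmul (x i) (y j)) (Cmul (x j) (y i)).

Lemma eq_of_Csub_pm (A B X : Cx) : X = C0 -> Csub A B = X \/ Csub A B = Copp X -> A = B.
Proof. intros -> [H|H]; apply Csub_eq0; rewrite H; ring. Qed.

Lemma wedge_of_span3 (W a1 a2 a3 b1 b2 b3 ui vi wi uj vj wj x1i x1j x2i x2j : Cx) :
  Cmul W x1i = Cadd (Cadd (Cmul a1 ui) (Cmul a2 vi)) (Cmul a3 wi) ->
  Cmul W x1j = Cadd (Cadd (Cmul a1 uj) (Cmul a2 vj)) (Cmul a3 wj) ->
  Cmul W x2i = Cadd (Cadd (Cmul b1 ui) (Cmul b2 vi)) (Cmul b3 wi) ->
  Cmul W x2j = Cadd (Cadd (Cmul b1 uj) (Cmul b2 vj)) (Cmul b3 wj) ->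
  Cmul (Cmul W W) (Csub (Cmul x1i x2j) (Cmul x1j x2i)) =
  Cadd (Cadd (Cmul (Csub (Cmul a1 b2) (Cmul a2 b1)) (Csub (Cmul ui vj) (Cmul uj vi)))
             (Cmul (Csub (Cmul a1 b3) (Cmul a3 b1)) (Csub (Cmul ui wj) (Cmul uj wi))))
       (Cmul (Csub (Cmul a2 b3) (Cmul a3 b2)) (Csub (Cmul vi wj) (Cmul vj wi))).
Proof.
  intros E1 E2 E3 E4.
  transitivity (Csub (Cmul (Cmul W x1i) (Cmul W x2j)) (Cmul (Cmul W x1j) (Cmul W x2i))); [ring|].
  rewrite E1, E2, E3, E4. ring.
Qed.

(* Linear algebra behind [eta_s1s2_span], ..., [deta_full_det3]: the relation
   [W = g1 - b2 + a3] is the definition of [W] as a coefficient of [d eta]. *)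
Lemma span_s1s2_alg (W uk vk wk a1 a2 a3 b2 g1 X1 X2 ak : Cx) : W <> C0 ->
  wk = Cadd (Csub X1 X2) ak ->
  Cmul (Cmul W W) X1 = Csub (Cmul g1 (Cmul W wk)) (Cmul a1 (Cmul uk W)) ->
  Cmul (Cmul W W) X2 = Cadd (Cmul a2 (Cmul W vk)) (Cmul b2 (Cmul W wk)) ->
  W = Cadd (Csub g1 b2) a3 ->
  Cmul W ak = Cadd (Cadd (Cmul a1 uk) (Cmul a2 vk)) (Cmul a3 wk).
Proof.
  intros HW Hw E1 E2 EW. apply (Cmul_reg_l W); [exact HW|].
  transitivity (Cadd (Csub (Cmul (Cmul W W) wk) (Cmul (Cmul W W) X1)) (Cmul (Cmul W W) X2));
    [rewrite Hw; ring|].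
  rewrite E1, E2, EW. ring.
Qed.

Lemma span_s1s3_alg (W uk vk wk a3 b1 b2 b3 g1 Y1 Y2 bk : Cx) : W <> C0 ->
  vk = Cadd (Csub Y1 bk) Y2 ->
  Cmul (Cmul W W) Y1 = Cadd (Cmul b1 (Cmul uk W)) (Cmul g1 (Cmul vk W)) ->
  Cmul (Cmul W W) Y2 = Cadd (Cmul a3 (Cmul W vk)) (Cmul b3 (Cmul W wk)) ->
  W = Cadd (Csub g1 b2) a3 ->
  Cmul W bk = Cadd (Cadd (Cmul b1 uk) (Cmul b2 vk)) (Cmul b3 wk).
Proof.
  intros HW Hv E1 E2 EW. apply (Cmul_reg_l W); [exact HW|].
  transitivity (Csub (Cadd (Cmul (Cmul W W) Y1) (Cmul (Cmul W W) Y2)) (Cmul (Cmul W W) vk));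
    [rewrite Hv; ring|].
  rewrite E1, E2, EW. ring.
Qed.

Lemma span_s2s3_alg (W uk vk wk a3 b2 g1 g2 g3 Z1 Z2 gk : Cx) : W <> C0 ->
  uk = Cadd (Csub gk Z1) Z2 ->
  Cmul (Cmul W W) Z1 = Cadd (Cmul b2 (Cmul uk W)) (Cmul g2 (Cmul vk W)) ->
  Cmul (Cmul W W) Z2 = Csub (Cmul a3 (Cmul uk W)) (Cmul g3 (Cmul W wk)) ->
  W = Cadd (Csub g1 b2) a3 ->
  Cmul W gk = Cadd (Cadd (Cmul g1 uk) (Cmul g2 vk)) (Cmul g3 wk).
Proof.
  intros HW Hu E1 E2 EW. apply (Cmul_reg_l W); [exact HW|].
  transitivity (Csub (Cadd (Cmul (Cmul W W) uk) (Cmul (Cmul W W) Z1)) (Cmul (Cmul W W) Z2));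
    [rewrite Hu; ring|].
  rewrite E1, E2, EW. ring.
Qed.

Lemma deta_det3_alg (W ui uj uk vi vj vk wi wj wk ai aj ak bi bj bk gi gj gk
   a1 a2 a3 b1 b2 b3 g1 g2 g3 Cjki Cikj Cijk : Cx) : W <> C0 ->
  W = Cadd (Csub g1 b2) a3 ->
  Cmul W ai = Cadd (Cadd (Cmul a1 ui) (Cmul a2 vi)) (Cmul a3 wi) ->
  Cmul W aj = Cadd (Cadd (Cmul a1 uj) (Cmul a2 vj)) (Cmul a3 wj) ->
  Cmul W ak = Cadd (Cadd (Cmul a1 uk) (Cmul a2 vk)) (Cmul a3 wk) ->
  Cmul W bi = Cadd (Cadd (Cmul b1 ui) (Cmul b2 vi)) (Cmul b3 wi) ->
  Cmul W bj = Cadd (Cadd (Cmul b1 uj) (Cmul b2 vj)) (Cmul b3 wj) ->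
  Cmul W bk = Cadd (Cadd (Cmul b1 uk) (Cmul b2 vk)) (Cmul b3 wk) ->
  Cmul W gi = Cadd (Cadd (Cmul g1 ui) (Cmul g2 vi)) (Cmul g3 wi) ->
  Cmul W gj = Cadd (Cadd (Cmul g1 uj) (Cmul g2 vj)) (Cmul g3 wj) ->
  Cmul W gk = Cadd (Cadd (Cmul g1 uk) (Cmul g2 vk)) (Cmul g3 wk) ->
  Cmul (Cmul W W) Cjki = Cadd (Cadd (Cmul ai (Csub (Cmul uj vk) (Cmul uk vj)))
        (Cmul bi (Csub (Cmul uj wk) (Cmul uk wj)))) (Cmul gi (Csub (Cmul vj wk) (Cmul vk wj))) ->
  Cmul (Cmul W W) Cikj = Cadd (Cadd (Cmul aj (Csub (Cmul ui vk) (Cmul uk vi)))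
        (Cmul bj (Csub (Cmul ui wk) (Cmul uk wi)))) (Cmul gj (Csub (Cmul vi wk) (Cmul vk wi))) ->
  Cmul (Cmul W W) Cijk = Cadd (Cadd (Cmul ak (Csub (Cmul ui vj) (Cmul uj vi)))
        (Cmul bk (Csub (Cmul ui wj) (Cmul uj wi)))) (Cmul gk (Csub (Cmul vi wj) (Cmul vj wi))) ->
  Cmul (Cmul W W) (Cadd (Csub Cjki Cikj) Cijk) =
  Cadd (Csub (Cmul ui (Csub (Cmul vj wk) (Cmul vk wj))) (Cmul uj (Csub (Cmul vi wk) (Cmul vk wi))))
       (Cmul uk (Csub (Cmul vi wj) (Cmul vj wi))).
Proof.
  intros HW EW Ai Aj Ak Bi Bj Bk Gi Gj Gk E1 E2 E3.
  transitivity (Cadd (Csub (Cmul (Cmul W W) Cjki) (Cmul (Cmul W W) Cikj)) (Cmul (Cmul W W) Cijk));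
    [ring|].
  rewrite E1, E2, E3. apply (Cmul_reg_l W); [exact HW|].
  transitivity (Cadd (Csub
    (Cadd (Cadd (Cmul (Cmul W ai) (Csub (Cmul uj vk) (Cmul uk vj)))
        (Cmul (Cmul W bi) (Csub (Cmul uj wk) (Cmul uk wj)))) (Cmul (Cmul W gi) (Csub (Cmul vj wk) (Cmul vk wj))))
    (Cadd (Cadd (Cmul (Cmul W aj) (Csub (Cmul ui vk) (Cmul uk vi)))
        (Cmul (Cmul W bj) (Csub (Cmul ui wk) (Cmul uk wi)))) (Cmul (Cmul W gj) (Csub (Cmul vi wk) (Cmul vk wi)))))
    (Cadd (Cadd (Cmul (Cmul W ak) (Csub (Cmul ui vj) (Cmul uj vi)))
        (Cmul (Cmul W bk) (Csub (Cmul ui wj) (Cmul uj wi)))) (Cmul (Cmul W gk) (Csub (Cmul vi wj) (Cmul vj wi)))));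
    [ring|].
  rewrite Ai, Aj, Ak, Bi, Bj, Bk, Gi, Gj, Gk, EW. ring.
Qed.

Section Dcoords.

Variables (n : nat) (c : nat -> nat -> nat -> Cx) (s1 s2 s3 : nat).
Hypotheses (Hs12 : (s1 < s2)%nat) (Hs23 : (s2 < s3)%nat) (Hs3 : (s3 < n)%nat).

Local Notation W := (deta_full c s1 s2 s3).

Definition ucoef (m : nat) : Cx := deta_full c m s2 s3.
Definition vcoef (m : nat) : Cx := deta_full c s1 m s3.
Definition wcoef (m : nat) : Cx := deta_full c s1 s2 m.

Definition eta_dcoords (i j k : nat) : Cx :=
  Cadd (Cadd (Cmul (eta_full c s1 s2 k) (wedge_vec ucoef vcoef i j))
             (Cmul (eta_full c s1 s3 k) (wedge_vec ucoef wcoef i j)))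
       (Cmul (eta_full c s2 s3 k) (wedge_vec vcoef wcoef i j)).

Lemma wedge13_eq0_span (xi : nat -> Cx) :
  (forall a b cc d, (a < b)%nat -> (b < cc)%nat -> (cc < d)%nat -> (d < n)%nat ->
      wedge13 (deta_full c) xi a b cc d = C0) ->
  forall k, (k < n)%nat ->
  Cmul W (xi k) = Cadd (Cadd (Cmul (xi s1) (ucoef k)) (Cmul (xi s2) (vcoef k))) (Cmul (xi s3) (wcoef k)).
Proof.
  intros HQ k Hk. unfold ucoef, vcoef, wcoef.
  destruct (Nat.lt_trichotomy k s1) as [L1|[->|G1]].
  - pose proof (HQ k s1 s2 s3 L1 Hs12 Hs23 Hs3) as H. unfold wedge13 in H.
    rewrite (deta_full_swap12 c s1 k s3), (deta_full_swap12 c s1 k s2),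
      (deta_full_swap23 c s1 s2 k) in H.
    apply (eq_of_Csub_pm _ _ _ H); (left; ring) || (right; ring).
  - rewrite deta_full_rep12, deta_full_rep13. ring.
  - destruct (Nat.lt_trichotomy k s2) as [L2|[->|G2]].
    + pose proof (HQ s1 k s2 s3 G1 L2 Hs23 Hs3) as H. unfold wedge13 in H.
      rewrite (deta_full_swap23 c s1 s2 k) in H.
      apply (eq_of_Csub_pm _ _ _ H); (left; ring) || (right; ring).
    + rewrite deta_full_rep12, deta_full_rep23. ring.
    + destruct (Nat.lt_trichotomy k s3) as [L3|[->|G3]].
      * pose proof (HQ s1 s2 k s3 Hs12 G2 L3 Hs3) as H. unfold wedge13 in H.
        rewrite (deta_full_swap12 c s2 k s3).
        apply (eq_of_Csub_pm _ _ _ H); (left; ring) || (right; ring).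
      * rewrite deta_full_rep13, deta_full_rep23. ring.
      * pose proof (HQ s1 s2 s3 k Hs12 Hs23 G3 Hk) as H. unfold wedge13 in H.
        rewrite (deta_full_swap12 c s2 k s3), (deta_full_swap23 c s2 s3 k),
          (deta_full_swap23 c s1 s3 k).
        apply (eq_of_Csub_pm _ _ _ H); (left; ring) || (right; ring).
Qed.

Section Local_factorization.

Variables (p : Cn) (r : R) (f1 f2 : nat -> Cn -> Cx).
Hypothesis Hball : forall z, in_ball n p r z ->
   (forall a b, (a < b < n)%nat -> eta_lin n c a b z = wedge11 f1 f2 a b z) /\
   (forall a b cc d, (a < b)%nat -> (b < cc)%nat -> (cc < d)%nat -> (d < n)%nat ->
      wedge13 (deta_full c) (fun i => f1 i z) a b cc d = C0 /\
      wedge13 (deta_full c) (fun i => f2 i z) a b cc d = C0).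

Lemma eta_lin_dcoords_on_ball y i j : in_ball n p r y -> (i < j < n)%nat ->
  Cmul (Cmul W W) (eta_lin n c i j y) =
  Cadd (Cadd (Cmul (eta_lin n c s1 s2 y) (wedge_vec ucoef vcoef i j))
             (Cmul (eta_lin n c s1 s3 y) (wedge_vec ucoef wcoef i j)))
       (Cmul (eta_lin n c s2 s3 y) (wedge_vec vcoef wcoef i j)).
Proof.
  intros Hy Hij. destruct (Hball y Hy) as [He HQ].
  rewrite !He by lia. unfold wedge11.
  pose proof (wedge13_eq0_span (fun i => f1 i y)
                (fun a b cc d h1 h2 h3 h4 => proj1 (HQ a b cc d h1 h2 h3 h4))) as V1.
  pose proof (wedge13_eq0_span (fun i => f2 i y)
                (fun a b cc d h1 h2 h3 h4 => proj2 (HQ a b cc d h1 h2 h3 h4))) as V2.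
  cbv beta in V1, V2.
  rewrite (wedge_of_span3 W _ _ _ _ _ _ _ _ _ _ _ _ _ _ _ _ (V1 i ltac:(lia)) (V1 j ltac:(lia))
             (V2 i ltac:(lia)) (V2 j ltac:(lia))).
  unfold wedge_vec. ring.
Qed.

Lemma eta_full_dcoords : (r > 0)%R ->
  forall i j k, (i < n)%nat -> (j < n)%nat -> (k < n)%nat ->
  Cmul (Cmul W W) (eta_full c i j k) = eta_dcoords i j k.
Proof.
  intros Hr.
  assert (Hlt : forall i j k, (i < j)%nat -> (j < n)%nat -> (k < n)%nat ->
     Cmul (Cmul W W) (eta_full c i j k) = eta_dcoords i j k).
  { intros i j k Hij Hj Hk. unfold eta_dcoords. rewrite !eta_full_lt by lia.
    apply Csub_eq0. revert k Hk.
    apply (linear_form_eq0_on_ball n p r _ Hr). intros y Hy.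
    rewrite (Csum_ext n _ (fun k => Csub (Cmul (Cmul W W) (Cmul (c i j k) (y k)))
        (Cadd (Cadd (Cmul (wedge_vec ucoef vcoef i j) (Cmul (c s1 s2 k) (y k)))
                    (Cmul (wedge_vec ucoef wcoef i j) (Cmul (c s1 s3 k) (y k))))
              (Cmul (wedge_vec vcoef wcoef i j) (Cmul (c s2 s3 k) (y k)))))) by (intros; ring).
    rewrite Csum_sub, !Csum_add, !Csum_mul_l.
    fold (eta_lin n c i j y) (eta_lin n c s1 s2 y) (eta_lin n c s1 s3 y) (eta_lin n c s2 s3 y).
    rewrite (eta_lin_dcoords_on_ball y i j Hy) by lia. ring. }
  intros i j k Hi Hj Hk.
  destruct (Nat.lt_trichotomy i j) as [L|[<-|G]].
  - apply Hlt; assumption.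
  - rewrite eta_full_diag. unfold eta_dcoords, wedge_vec. ring.
  - rewrite eta_full_anti. transitivity (Copp (Cmul (Cmul W W) (eta_full c j i k))); [ring|].
    rewrite Hlt by assumption. unfold eta_dcoords, wedge_vec. ring.
Qed.

End Local_factorization.

Section Decomposed.

Hypothesis HW : W <> C0.
Hypothesis Hdec : forall i j k, (i < n)%nat -> (j < n)%nat -> (k < n)%nat ->
  Cmul (Cmul W W) (eta_full c i j k) = eta_dcoords i j k.

Ltac dcoords_expand E :=
  unfold eta_dcoords, wedge_vec, ucoef, vcoef, wcoef in E;
  rewrite ?deta_full_rep12, ?deta_full_rep13, ?deta_full_rep23 in E.

Lemma eta_s1s2_span k : (k < n)%nat ->
  Cmul W (eta_full c s1 s2 k) =
  Cadd (Cadd (Cmul (eta_full c s1 s2 s1) (ucoef k)) (Cmul (eta_full c s1 s2 s2) (vcoef k)))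
       (Cmul (eta_full c s1 s2 s3) (wcoef k)).
Proof.
  intros Hk.
  pose proof (Hdec s2 k s1 ltac:(lia) Hk ltac:(lia)) as E1.
  pose proof (Hdec s1 k s2 ltac:(lia) Hk ltac:(lia)) as E2.
  dcoords_expand E1. dcoords_expand E2.
  apply (span_s1s2_alg W _ _ _ _ _ _ (eta_full c s1 s3 s2) (eta_full c s2 s3 s1)
           (eta_full c s2 k s1) (eta_full c s1 k s2) _ HW);
    [reflexivity | rewrite E1; unfold ucoef, vcoef, wcoef; ring
    | rewrite E2; unfold ucoef, vcoef, wcoef; ring | reflexivity].
Qed.

Lemma eta_s1s3_span k : (k < n)%nat ->
  Cmul W (eta_full c s1 s3 k) =
  Cadd (Cadd (Cmul (eta_full c s1 s3 s1) (ucoef k)) (Cmul (eta_full c s1 s3 s2) (vcoef k)))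
       (Cmul (eta_full c s1 s3 s3) (wcoef k)).
Proof.
  intros Hk.
  pose proof (Hdec k s3 s1 Hk ltac:(lia) ltac:(lia)) as E1.
  pose proof (Hdec s1 k s3 ltac:(lia) Hk ltac:(lia)) as E2.
  dcoords_expand E1. dcoords_expand E2.
  apply (span_s1s3_alg W _ _ _ (eta_full c s1 s2 s3) _ _ _ (eta_full c s2 s3 s1)
           (eta_full c k s3 s1) (eta_full c s1 k s3) _ HW);
    [reflexivity | rewrite E1; unfold ucoef, vcoef, wcoef; ring
    | rewrite E2; unfold ucoef, vcoef, wcoef; ring | reflexivity].
Qed.

Lemma eta_s2s3_span k : (k < n)%nat ->
  Cmul W (eta_full c s2 s3 k) =
  Cadd (Cadd (Cmul (eta_full c s2 s3 s1) (ucoef k)) (Cmul (eta_full c s2 s3 s2) (vcoef k)))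
       (Cmul (eta_full c s2 s3 s3) (wcoef k)).
Proof.
  intros Hk.
  pose proof (Hdec k s3 s2 Hk ltac:(lia) ltac:(lia)) as E1.
  pose proof (Hdec k s2 s3 Hk ltac:(lia) ltac:(lia)) as E2.
  dcoords_expand E1. dcoords_expand E2.
  apply (span_s2s3_alg W _ _ _ (eta_full c s1 s2 s3) (eta_full c s1 s3 s2) _ _ _
           (eta_full c k s3 s2) (eta_full c k s2 s3) _ HW);
    [reflexivity | rewrite E1; unfold ucoef, vcoef, wcoef; ring
    | rewrite E2; unfold ucoef, vcoef, wcoef; ring | reflexivity].
Qed.

Lemma deta_full_det3 i j k : (i < n)%nat -> (j < n)%nat -> (k < n)%nat ->
  Cmul (Cmul W W) (deta_full c i j k) = det3v ucoef vcoef wcoef i j k.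
Proof.
  intros Hi Hj Hk. unfold deta_full at 1, det3v.
  exact (deta_det3_alg W (ucoef i) (ucoef j) (ucoef k) (vcoef i) (vcoef j) (vcoef k)
    (wcoef i) (wcoef j) (wcoef k) _ _ _ _ _ _ _ _ _ _ _ _ _ _ _ _ _ _ _ _ _ HW eq_refl
    (eta_s1s2_span i Hi) (eta_s1s2_span j Hj) (eta_s1s2_span k Hk)
    (eta_s1s3_span i Hi) (eta_s1s3_span j Hj) (eta_s1s3_span k Hk)
    (eta_s2s3_span i Hi) (eta_s2s3_span j Hj) (eta_s2s3_span k Hk)
    (Hdec j k i Hj Hk Hi) (Hdec i k j Hi Hk Hj) (Hdec i j k Hi Hj Hk)).
Qed.

End Decomposed.

End Dcoords.

(** * The change of coordinates *)

Definition transp (a b j : nat) : nat := if Nat.eqb j a then b else if Nat.eqb j b then a else j.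

Ltac nat_cases :=
  repeat match goal with |- context [Nat.eqb ?x ?y] => destruct (Nat.eqb_spec x y) end; try lia.

Lemma transp_invol a b j : transp a b (transp a b j) = j.
Proof. unfold transp. destruct (Nat.eqb_spec j a), (Nat.eqb_spec j b); nat_cases. Qed.
Lemma transp_lt a b j n : (a < n)%nat -> (b < n)%nat -> (j < n)%nat -> (transp a b j < n)%nat.
Proof. unfold transp. nat_cases. Qed.
Lemma transp_other a b j : j <> a -> j <> b -> transp a b j = j.
Proof. unfold transp. nat_cases. Qed.
Lemma transp_l a b : transp a b a = b.
Proof. unfold transp. rewrite Nat.eqb_refl. reflexivity. Qed.

Lemma Csum_transp n f a b : (a < n)%nat -> (b < n)%nat ->
  Csum n (fun j => f (transp a b j)) = Csum n f.
Proof.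
  intros Ha Hb. destruct (Nat.eq_dec a b) as [<-|Hab].
  { apply Csum_ext. intros k _. unfold transp. destruct (Nat.eqb_spec k a); subst; auto. }
  rewrite (Csum_extract n _ a Ha), (Csum_extract n f a Ha).
  rewrite (Csum_extract n _ b Hb), (Csum_extract n (fun k => if Nat.eqb k a then C0 else f k) b Hb).
  rewrite (Csum_ext n (fun k => if Nat.eqb k b then C0 else if Nat.eqb k a then C0 else f (transp a b k))
                      (fun k => if Nat.eqb k b then C0 else if Nat.eqb k a then C0 else f k)).
  - unfold transp. rewrite !Nat.eqb_refl. destruct (Nat.eqb_spec b a); [lia | ring].
  - intros k _. destruct (Nat.eqb_spec k b); auto. destruct (Nat.eqb_spec k a); auto.
    rewrite transp_other; auto.
Qed.

Definition perm3 s1 s2 s3 j := transp 0 s1 (transp 1 s2 (transp 2 s3 j)).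
Definition perm3_inv s1 s2 s3 j := transp 2 s3 (transp 1 s2 (transp 0 s1 j)).

Lemma perm3_inv_K s1 s2 s3 j : perm3 s1 s2 s3 (perm3_inv s1 s2 s3 j) = j.
Proof. unfold perm3, perm3_inv. rewrite !transp_invol. reflexivity. Qed.

Lemma perm3_inv_lt s1 s2 s3 n j : (s1 < s2)%nat -> (s2 < s3)%nat -> (s3 < n)%nat -> (j < n)%nat ->
  (perm3_inv s1 s2 s3 j < n)%nat.
Proof. intros. unfold perm3_inv. repeat apply transp_lt; lia. Qed.

Lemma perm3_0 s1 s2 s3 : (s1 < s2)%nat -> (s2 < s3)%nat -> perm3 s1 s2 s3 0 = s1.
Proof. intros. unfold perm3. rewrite (transp_other 2 s3 0), (transp_other 1 s2 0) by lia. apply transp_l. Qed.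
Lemma perm3_1 s1 s2 s3 : (s1 < s2)%nat -> (s2 < s3)%nat -> perm3 s1 s2 s3 1 = s2.
Proof. intros. unfold perm3. rewrite (transp_other 2 s3 1), transp_l by lia. apply transp_other; lia. Qed.
Lemma perm3_2 s1 s2 s3 : (s1 < s2)%nat -> (s2 < s3)%nat -> perm3 s1 s2 s3 2 = s3.
Proof. intros. unfold perm3. rewrite transp_l, (transp_other 1 s2 s3) by lia. apply transp_other; lia. Qed.

Lemma Csum_perm3_inv n s1 s2 s3 f : (s1 < s2)%nat -> (s2 < s3)%nat -> (s3 < n)%nat ->
  Csum n (fun j => f (perm3_inv s1 s2 s3 j)) = Csum n f.
Proof.
  intros. unfold perm3_inv.
  rewrite (Csum_transp n (fun j => f (transp 2 s3 (transp 1 s2 j))) 0 s1),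
    (Csum_transp n (fun j => f (transp 2 s3 j)) 1 s2), (Csum_transp n f 2 s3) by lia.
  reflexivity.
Qed.

(* When the leading 3x3 block of [(U, V, X)] is [W] times the identity, the matrix is
   inverted explicitly by [coordmat_inv]. *)
Definition coordmat (W : Cx) (U V X : nat -> Cx) (i m : nat) : Cx :=
  if Nat.eqb i 0 then U m else if Nat.eqb i 1 then Cdiv (V m) W
  else if Nat.eqb i 2 then Cdiv (X m) W else Cdelta i m.
Definition coordmat_inv (W : Cx) (U V X : nat -> Cx) (m j : nat) : Cx :=
  if Nat.eqb m 0 then (if Nat.eqb j 0 then Cinv W else if Nat.ltb j 3 then C0 else Copp (Cdiv (U j) W))
  else if Nat.eqb m 1 then (if Nat.eqb j 1 then C1 else if Nat.ltb j 3 then C0 else Copp (Cdiv (V j) W))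
  else if Nat.eqb m 2 then (if Nat.eqb j 2 then C1 else if Nat.ltb j 3 then C0 else Copp (Cdiv (X j) W))
  else Cdelta m j.

Section Coordmat.

Variables (n : nat) (W : Cx) (U V X : nat -> Cx).
Hypotheses (HW : W <> C0) (Hn : (3 <= n)%nat)
  (U0 : U 0%nat = W) (U1 : U 1%nat = C0) (U2 : U 2%nat = C0)
  (V0 : V 0%nat = C0) (V1 : V 1%nat = W) (V2 : V 2%nat = C0)
  (X0 : X 0%nat = C0) (X1 : X 1%nat = C0) (X2 : X 2%nat = W).

Ltac coordmat_simpl :=
  unfold coordmat_inv, coordmat, Cdelta; fold C1;
  repeat match goal with
  | |- context [Nat.eqb ?x ?y] => destruct (Nat.eqb_spec x y); [try subst x; try subst y|]
  | |- context [Nat.ltb ?x ?y] => destruct (Nat.ltb_spec x y)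
  end; try lia;
  rewrite ?U0, ?U1, ?U2, ?V0, ?V1, ?V2, ?X0, ?X1, ?X2; unfold Cdiv; try field; auto.

Ltac small_index i := destruct i as [|[|[|i]]]; try lia.

Lemma coordmat_inv_mul a b : (a < n)%nat -> (b < n)%nat ->
  Csum n (fun j => Cmul (coordmat_inv W U V X a j) (coordmat W U V X j b)) = Cdelta a b.
Proof.
  intros Ha Hb. destruct (Nat.lt_ge_cases a 3); [destruct (Nat.lt_ge_cases b 3)|].
  - rewrite (Csum_single n _ a Ha); [small_index a; small_index b; coordmat_simpl|].
    intros k Hk Hka. coordmat_simpl.
  - rewrite (Csum_pair n _ a b Ha Hb ltac:(lia)); [small_index a; coordmat_simpl|].
    intros k Hk Hka Hkb. coordmat_simpl.
  - rewrite (Csum_single n _ a Ha); [coordmat_simpl|]. intros k Hk Hka. coordmat_simpl.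
Qed.

Lemma coordmat_mul_inv i k : (i < n)%nat -> (k < n)%nat ->
  Csum n (fun m => Cmul (coordmat W U V X i m) (coordmat_inv W U V X m k)) = Cdelta i k.
Proof.
  intros Hi Hk. destruct (Nat.lt_ge_cases i 3); [destruct (Nat.lt_ge_cases k 3)|].
  - rewrite (Csum_single n _ i Hi); [small_index i; small_index k; coordmat_simpl|].
    intros m Hm Hmi. destruct (Nat.lt_ge_cases m 3); [small_index m; small_index i|];
      coordmat_simpl.
  - rewrite (Csum_pair n _ i k Hi Hk ltac:(lia)); [small_index i; coordmat_simpl|].
    intros m Hm Hmi Hmk. destruct (Nat.lt_ge_cases m 3); [small_index m; small_index i|];
      coordmat_simpl.
  - rewrite (Csum_single n _ i Hi); [coordmat_simpl|]. intros m Hm Hmi. coordmat_simpl.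
Qed.

End Coordmat.

(** * Normal form *)

(* [B_01 = eta_{s1 s2} / W], [B_02 = eta_{s1 s3} / W], [B_12 = eta_{s2 s3}] in the new coordinates,
   where [W eta_{s1 s2} = a1 x0 + a2 W x1 + a3 W x2] and similarly with [b], [g]. *)
Definition beta_normal (W a1 a2 a3 b1 b2 b3 g1 g2 g3 : Cx) (i j m : nat) : Cx :=
  match i, j, m with
  | 0, 1, 0 => Cdiv a1 (Cmul W W) | 0, 1, 1 => Cdiv a2 W | 0, 1, 2 => Cdiv a3 W
  | 0, 2, 0 => Cdiv b1 (Cmul W W) | 0, 2, 1 => Cdiv b2 W | 0, 2, 2 => Cdiv b3 W
  | 1, 2, 0 => Cdiv g1 W | 1, 2, 1 => g2 | 1, 2, 2 => g3
  | _, _, _ => C0 end.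

(* The quadratic forms [A_j] of a primitive [alpha] of [eta - x0 dx1 /\ dx2]; it exists
   because [W = g1 - b2 + a3]. *)
Definition q_normal (W a1 a2 a3 b1 b2 b3 g2 g3 : Cx) (j u v : nat) : Cx :=
  match j, u, v with
  | 1, 0, 0 => Cdiv a1 (Cmul (Cadd C1 C1) (Cmul W W)) | 1, 0, 1 => Cdiv a2 W | 1, 0, 2 => Cdiv a3 W
  | 2, 0, 0 => Cdiv b1 (Cmul (Cadd C1 C1) (Cmul W W)) | 2, 0, 1 => Cdiv b2 W | 2, 0, 2 => Cdiv b3 W
  | 2, 1, 1 => Cdiv g2 (Cadd C1 C1) | 2, 1, 2 => g3
  | _, _, _ => C0 end.

Lemma pull2_normal_forms (P : nat -> nat -> Cx) (x : nat -> Cx) (a b : nat)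
  (W a1 a2 a3 b1 b2 b3 g1 g2 g3 ua ub va vb wa wb Sa Sb Sg L : Cx) : W <> C0 ->
  P 0%nat a = ua -> P 0%nat b = ub -> P 1%nat a = Cdiv va W -> P 1%nat b = Cdiv vb W ->
  P 2%nat a = Cdiv wa W -> P 2%nat b = Cdiv wb W ->
  Cmul W Sa = Cadd (Cadd (Cmul a1 (x 0%nat)) (Cmul a2 (Cmul W (x 1%nat)))) (Cmul a3 (Cmul W (x 2%nat))) ->
  Cmul W Sb = Cadd (Cadd (Cmul b1 (x 0%nat)) (Cmul b2 (Cmul W (x 1%nat)))) (Cmul b3 (Cmul W (x 2%nat))) ->
  Cmul W Sg = Cadd (Cadd (Cmul g1 (x 0%nat)) (Cmul g2 (Cmul W (x 1%nat)))) (Cmul g3 (Cmul W (x 2%nat))) ->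
  Cmul (Cmul W W) L = Cadd (Cadd (Cmul Sa (Csub (Cmul ua vb) (Cmul ub va)))
      (Cmul Sb (Csub (Cmul ua wb) (Cmul ub wa)))) (Cmul Sg (Csub (Cmul va wb) (Cmul vb wa))) ->
  (L = pull2 3 P (fun i j => if Nat.ltb i j
        then Csum 3 (fun m => Cmul (beta_normal W a1 a2 a3 b1 b2 b3 g1 g2 g3 i j m) (x m)) else C0) a b) /\
  (W = Cadd (Csub g1 b2) a3 ->
   L = pull2 3 P (T_normal (q_normal W a1 a2 a3 b1 b2 b3 g2 g3) x) a b).
Proof.
  intros HW P0a P0b P1a P1b P2a P2b ESa ESb ESg EL.
  assert (Hdiv : forall A B, Cmul W A = B -> A = Cdiv B W)
    by (intros A B <-; unfold Cdiv; field; exact HW).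
  assert (HL : L = Cdiv (Cadd (Cadd (Cmul Sa (Csub (Cmul ua vb) (Cmul ub va)))
      (Cmul Sb (Csub (Cmul ua wb) (Cmul ub wa)))) (Cmul Sg (Csub (Cmul va wb) (Cmul vb wa)))) (Cmul W W))
    by (rewrite <- EL; unfold Cdiv; field; exact HW).
  apply Hdiv in ESa, ESb, ESg. subst L Sa Sb Sg. pose proof C2_neq0. split.
  - unfold pull2. cbn [Csum Nat.ltb Nat.leb beta_normal].
    rewrite P0a, P0b, P1a, P1b, P2a, P2b. unfold Cdiv. field. auto.
  - intros EW. assert (a3 = Csub (Cadd W b2) g1) by (rewrite EW; ring). subst a3.
    unfold pull2, T_normal, dA. cbn [Csum Nat.ltb Nat.leb Nat.eqb andb q_normal].
    rewrite P0a, P0b, P1a, P1b, P2a, P2b. unfold Cdiv. field. auto.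
Qed.

Section Normal_form.

Variables (n : nat) (c : nat -> nat -> nat -> Cx) (s1 s2 s3 : nat).
Hypotheses (Hs12 : (s1 < s2)%nat) (Hs23 : (s2 < s3)%nat) (Hs3 : (s3 < n)%nat).

Local Notation W := (deta_full c s1 s2 s3).
Local Notation u := (ucoef c s2 s3).
Local Notation v := (vcoef c s1 s3).
Local Notation w := (wcoef c s1 s2).
Local Notation perm := (perm3 s1 s2 s3).
Local Notation perm_inv := (perm3_inv s1 s2 s3).

(* The new coordinates, indexed from 0, are [x0 = u.z], [x1 = v.z / W], [x2 = w.z / W], and [x_i = z_(perm i)]
   for [i >= 3]. *)
Definition Pmat (i k : nat) : Cx :=
  coordmat W (fun m => u (perm m)) (fun m => v (perm m)) (fun m => w (perm m)) i (perm_inv k).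
Definition Qmat (k j : nat) : Cx :=
  coordmat_inv W (fun m => u (perm m)) (fun m => v (perm m)) (fun m => w (perm m)) (perm_inv k) j.

Lemma Pmat_row0 k : Pmat 0 k = u k.
Proof. unfold Pmat, coordmat. simpl. rewrite perm3_inv_K. reflexivity. Qed.
Lemma Pmat_row1 k : Pmat 1 k = Cdiv (v k) W.
Proof. unfold Pmat, coordmat. simpl. rewrite perm3_inv_K. reflexivity. Qed.
Lemma Pmat_row2 k : Pmat 2 k = Cdiv (w k) W.
Proof. unfold Pmat, coordmat. simpl. rewrite perm3_inv_K. reflexivity. Qed.

Lemma dcoords_perm_block :
  u (perm 0) = W /\ u (perm 1) = C0 /\ u (perm 2) = C0 /\
  v (perm 0) = C0 /\ v (perm 1) = W /\ v (perm 2) = C0 /\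
  w (perm 0) = C0 /\ w (perm 1) = C0 /\ w (perm 2) = W.
Proof.
  unfold ucoef, vcoef, wcoef.
  rewrite perm3_0, perm3_1, perm3_2 by assumption.
  rewrite deta_full_rep12, deta_full_rep13, deta_full_rep23, deta_full_rep12, deta_full_rep13,
    deta_full_rep23.
  repeat split.
Qed.

Hypothesis HW : W <> C0.

Lemma Pmat_Qmat_inverse i k : (i < n)%nat -> (k < n)%nat ->
  Csum n (fun j => Cmul (Pmat i j) (Qmat j k)) = Cdelta i k /\
  Csum n (fun j => Cmul (Qmat i j) (Pmat j k)) = Cdelta i k.
Proof.
  intros Hi Hk.
  destruct dcoords_perm_block as (U0 & U1 & U2 & V0 & V1 & V2 & X0 & X1 & X2).
  assert (Hn : (3 <= n)%nat) by lia.
  split.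
  - unfold Pmat, Qmat.
    rewrite (Csum_perm3_inv n s1 s2 s3
      (fun m => Cmul (coordmat W (fun m => u (perm m)) (fun m => v (perm m)) (fun m => w (perm m)) i m)
                     (coordmat_inv W (fun m => u (perm m)) (fun m => v (perm m)) (fun m => w (perm m)) m k)))
      by assumption.
    exact (coordmat_mul_inv n W _ _ _ HW Hn U0 U1 U2 V0 V1 V2 X0 X1 X2 i k Hi Hk).
  - unfold Pmat, Qmat.
    rewrite (coordmat_inv_mul n W _ _ _ HW Hn U0 U1 U2 V0 V1 V2 X0 X1 X2)
      by (apply perm3_inv_lt; assumption).
    unfold Cdelta. destruct (Nat.eqb_spec (perm_inv i) (perm_inv k)) as [E|E];
      destruct (Nat.eqb_spec i k) as [E'|E']; try reflexivity.
    + exfalso. apply E'. rewrite <- (perm3_inv_K s1 s2 s3 i), <- (perm3_inv_K s1 s2 s3 k), E.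
      reflexivity.
    + subst. tauto.
Qed.


Hypothesis Hdec : forall i j k, (i < n)%nat -> (j < n)%nat -> (k < n)%nat ->
  Cmul (Cmul W W) (eta_full c i j k) = eta_dcoords c s1 s2 s3 i j k.

Lemma d_eta_lin_det3 a b e : (a < b < e)%nat -> (e < n)%nat -> d_eta_lin c a b e = det3 Pmat a b e.
Proof.
  intros Hab He. rewrite <- deta_full_sorted by lia.
  apply (Cmul_reg_l (Cmul W W)).
  { intro HWW. apply HW, (Cmul_reg_l W); [|rewrite HWW]; [exact HW | ring]. }
  rewrite (deta_full_det3 n c s1 s2 s3 Hs12 Hs23 Hs3 HW Hdec) by lia.
  unfold det3, det3v. rewrite !Pmat_row0, !Pmat_row1, !Pmat_row2. unfold Cdiv. field. exact HW.
Qed.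

Lemma eta_lin_dcoords z a b : (a < b < n)%nat ->
  Cmul (Cmul W W) (eta_lin n c a b z) =
  Cadd (Cadd (Cmul (eta_lin n c s1 s2 z) (wedge_vec u v a b))
             (Cmul (eta_lin n c s1 s3 z) (wedge_vec u w a b)))
       (Cmul (eta_lin n c s2 s3 z) (wedge_vec v w a b)).
Proof.
  intros Hab. unfold eta_lin. rewrite <- Csum_mul_l.
  rewrite (Csum_ext n _ (fun k => Cadd (Cadd
      (Cmul (wedge_vec u v a b) (Cmul (c s1 s2 k) (z k)))
      (Cmul (wedge_vec u w a b) (Cmul (c s1 s3 k) (z k))))
      (Cmul (wedge_vec v w a b) (Cmul (c s2 s3 k) (z k))))).
  - rewrite !Csum_add, !Csum_mul_l. ring.
  - intros k Hk. rewrite <- (eta_full_lt c a b k), <- (eta_full_lt c s1 s2 k),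
      <- (eta_full_lt c s1 s3 k), <- (eta_full_lt c s2 s3 k) by lia.
    transitivity (Cmul (Cmul (Cmul W W) (eta_full c a b k)) (z k)); [ring|].
    rewrite Hdec by lia. unfold eta_dcoords. ring.
Qed.

Lemma coordX_dcoords z :
  coordX n Pmat 0 z = Csum n (fun k => Cmul (u k) (z k)) /\
  Cmul W (coordX n Pmat 1 z) = Csum n (fun k => Cmul (v k) (z k)) /\
  Cmul W (coordX n Pmat 2 z) = Csum n (fun k => Cmul (w k) (z k)).
Proof.
  unfold coordX. rewrite <- !Csum_mul_l. repeat split; apply Csum_ext; intros k _;
    rewrite ?Pmat_row0, ?Pmat_row1, ?Pmat_row2; unfold Cdiv; [reflexivity | field; exact HW ..].
Qed.

Lemma eta_lin_span z (e1 e2 : nat) : (e1 < e2)%nat -> (e2 < n)%nat ->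
  (forall k, (k < n)%nat -> Cmul W (eta_full c e1 e2 k) =
     Cadd (Cadd (Cmul (eta_full c e1 e2 s1) (u k)) (Cmul (eta_full c e1 e2 s2) (v k)))
          (Cmul (eta_full c e1 e2 s3) (w k))) ->
  Cmul W (eta_lin n c e1 e2 z) =
  Cadd (Cadd (Cmul (eta_full c e1 e2 s1) (coordX n Pmat 0 z))
             (Cmul (eta_full c e1 e2 s2) (Cmul W (coordX n Pmat 1 z))))
       (Cmul (eta_full c e1 e2 s3) (Cmul W (coordX n Pmat 2 z))).
Proof.
  intros H12 H2 Hspan. destruct (coordX_dcoords z) as (X0 & X1 & X2).
  rewrite X0, X1, X2. unfold eta_lin. apply Csum_lincomb3.
  intros k Hk. rewrite <- (eta_full_lt c e1 e2 k) by exact H12. apply Hspan, Hk.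
Qed.

Definition beta_coef : nat -> nat -> nat -> Cx :=
  beta_normal W (eta_full c s1 s2 s1) (eta_full c s1 s2 s2) (eta_full c s1 s2 s3)
    (eta_full c s1 s3 s1) (eta_full c s1 s3 s2) (eta_full c s1 s3 s3)
    (eta_full c s2 s3 s1) (eta_full c s2 s3 s2) (eta_full c s2 s3 s3).
Definition q_coef : nat -> nat -> nat -> Cx :=
  q_normal W (eta_full c s1 s2 s1) (eta_full c s1 s2 s2) (eta_full c s1 s2 s3)
    (eta_full c s1 s3 s1) (eta_full c s1 s3 s2) (eta_full c s1 s3 s3)
    (eta_full c s2 s3 s2) (eta_full c s2 s3 s3).

Lemma eta_lin_normal_forms z a b : (a < b < n)%nat ->
  (eta_lin n c a b z = pull2 3 Pmat (fun i j => if Nat.ltb i j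
      then Csum 3 (fun m => Cmul (beta_coef i j m) (coordX n Pmat m z)) else C0) a b) /\
  eta_lin n c a b z = pull2 3 Pmat (T_normal q_coef (fun m => coordX n Pmat m z)) a b.
Proof.
  intros Hab.
  destruct (pull2_normal_forms Pmat (fun m => coordX n Pmat m z) a b W _ _ _ _ _ _ _ _ _
    (u a) (u b) (v a) (v b) (w a) (w b) _ _ _ (eta_lin n c a b z) HW
    (Pmat_row0 a) (Pmat_row0 b) (Pmat_row1 a) (Pmat_row1 b) (Pmat_row2 a) (Pmat_row2 b)
    (eta_lin_span z s1 s2 Hs12 ltac:(lia) (eta_s1s2_span n c s1 s2 s3 Hs12 Hs23 Hs3 HW Hdec))
    (eta_lin_span z s1 s3 ltac:(lia) Hs3 (eta_s1s3_span n c s1 s2 s3 Hs12 Hs23 Hs3 HW Hdec))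
    (eta_lin_span z s2 s3 Hs23 Hs3 (eta_s2s3_span n c s1 s2 s3 Hs12 Hs23 Hs3 HW Hdec))
    (eta_lin_dcoords z a b Hab)) as [Hbeta Hq].
  split; [exact Hbeta | exact (Hq eq_refl)].
Qed.

End Normal_form.

(* One of the three terms of [d_eta_lin c s1 s2 s3] is nonzero, and it is a coefficient of
   [eta] at a coordinate vector. *)
Lemma eta_lin_nonzero_somewhere n c s1 s2 s3 : (s1 < s2 < s3)%nat -> (s3 < n)%nat ->
  d_eta_lin c s1 s2 s3 <> C0 -> exists p a b, (a < b < n)%nat /\ eta_lin n c a b p <> C0.
Proof.
  intros Hs Hs3 Hne. unfold eta_lin.
  assert (Hpoint : forall a b k, (k < n)%nat -> Csum n (fun j => Cmul (c a b j) (evec k C1 j)) = c a b k)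
    by (intros a b k Hk; rewrite Csum_evec by exact Hk; ring).
  destruct (Ceq_dec (c s2 s3 s1) C0) as [Z1|Z1];
    [| exists (evec s1 C1), s2, s3; rewrite Hpoint by lia; split; [lia | exact Z1]].
  destruct (Ceq_dec (c s1 s3 s2) C0) as [Z2|Z2];
    [| exists (evec s2 C1), s1, s3; rewrite Hpoint by lia; split; [lia | exact Z2]].
  exists (evec s3 C1), s1, s2. rewrite Hpoint by lia. split; [lia|].
  intro Z3. apply Hne. unfold d_eta_lin. rewrite Z1, Z2, Z3. ring.
Qed.

Theorem mainTheorem12 (n : nat) (hn : (4 <= n)%nat)
  (c : nat -> nat -> nat -> Cx)
  (Hint : integrable2 n (eta_lin n c))
  (Hd : exists a b e, (a < b < e)%nat /\ (e < n)%nat /\ d_eta_lin c a b e <> C0) :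
  exists (P Q : nat -> nat -> Cx),
    (forall i k, (i < n)%nat -> (k < n)%nat ->
       Csum n (fun j => Cmul (P i j) (Q j k)) = Cdelta i k /\
       Csum n (fun j => Cmul (Q i j) (P j k)) = Cdelta i k) /\
    (forall a b e, (a < b < e)%nat -> (e < n)%nat -> d_eta_lin c a b e = det3 P a b e) /\
    (exists beta : nat -> nat -> nat -> Cx,
       forall z a b, (a < b < n)%nat ->
         eta_lin n c a b z =
         pull2 3 P (fun i j => if Nat.ltb i j
             then Csum 3 (fun m => Cmul (beta i j m) (coordX n P m z)) else C0) a b) /\
    (exists q : nat -> nat -> nat -> Cx,
       forall z a b, (a < b < n)%nat ->
         eta_lin n c a b z = pull2 3 P (T_normal q (fun m => coordX n P m z)) a b).
Proof.
  destruct Hd as (s1 & s2 & s3 & [H12 H23] & H3 & Hne).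
  assert (HW : deta_full c s1 s2 s3 <> C0) by (rewrite deta_full_sorted; assumption).
  destruct (eta_lin_nonzero_somewhere n c s1 s2 s3 (conj H12 H23) H3 Hne) as [p Hp].
  destruct (integrable_local_factorization n c p Hint Hp) as (r & Hr & f1 & f2 & Hball).
  pose proof (eta_full_dcoords n c s1 s2 s3 H12 H23 H3 p r f1 f2 Hball Hr) as Hdec.
  exists (Pmat c s1 s2 s3), (Qmat c s1 s2 s3). split; [|split; [|split]].
  - apply Pmat_Qmat_inverse; assumption.
  - apply d_eta_lin_det3; assumption.
  - exists (beta_coef c s1 s2 s3). intros z a b Hab.
    apply (eta_lin_normal_forms n c s1 s2 s3 H12 H23 H3 HW Hdec z a b Hab).
  - exists (q_coef c s1 s2 s3). intros z a b Hab.
    apply (eta_lin_normal_forms n c s1 s2 s3 H12 H23 H3 HW Hdec z a b Hab).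
Qed.
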